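(* Consider a ground terminal at $(p,q,h_0)$ and a UAV at $(x,y,z)$ with the altitude $z>h_0$ fixed, and let $d(x,y)=\sqrt{(x-p)^2+(y-q)^2+(z-h_0)^2}$. Let $a,b>0$, $0<\eta_{LoS}<\eta_{NLoS}$, $L>0$ and $G>0$ be constants, and define on $\mathbb{R}^2$ \[ \theta(x,y)=\tfrac{180}{\pi}\arcsin\!\Big(\tfrac{z-h_0}{d(x,y)}\Big),\quad PR(x,y)=\frac{1}{1+a\exp(-b(\theta(x,y)-a))}, \] \[ h(x,y)=\frac{G}{d(x,y)^2L\big(PR(x,y)\,\eta_{LoS}+(1-PR(x,y))\,\eta_{NLoS}\big)}. \] Fix a reference point $(x^0,y^0)\neq(p,q)$ and set $C=d(x^0,y^0)/(z-h_0)>1$. Define \[ \bar\theta(x,y)=\tfrac{180}{\pi}\Big(\arcsin(1/C)-\tfrac{1}{C\sqrt{C^2-1}}\big(\tfrac{d(x,y)}{z-h_0}-C\big)\Big),\qquad D=1+a\exp\big(-b(\bar\theta(x^0,y^0)-a)\big), \] \[ \overline{PR}(x,y)=\frac{2}{D}-\frac{1}{D^2}-\frac{a}{D^2}\exp\big(-b(\bar\theta(x,y)-a)\big),\qquad \Lambda(x,y)=d(x,y)^2L\big(\overline{PR}(x,y)\,\eta_{LoS}+(1-\overline{PR}(x,y))\,\eta_{NLoS}\big), \] and, with $\Lambda_0=\Lambda(x^0,y^0)$, \[ H(x,y)=G\Big(\frac{2}{\Lambda_0}-\frac{\Lambda(x,y)}{\Lambda_0^2}\Big). \] Then $H(x,y)\le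 h(x,y)$ for all $(x,y)\in\mathbb{R}^2$, and $H$ is concave on $\mathbb{R}^2$. In particular this holds for the UAV–BS channel gain $h_{U,B}^k$ (terminal at $(0,0,H_B)$, $G=|g_{U,B}^k|^2$, $L=L^k$) with its approximation $H_{U,B}^k$, and for the UAV–UE-$n$ channel gain $h_{n,U}^k$ (terminal at $(x_n,y_n,0)$, $G=|g_{U,n}^k|^2$, $L=L^k$) with its approximation $H_{n,U}^k$.
   Context: This is the air-to-ground channel model: $\theta$ is the elevation angle in degrees, $PR$ the line-of-sight probability with environment constants $a,b$, $\eta_{LoS},\eta_{NLoS}$ are the (linear-scale) additional attenuation factors of LoS/NLoS links, $L^k=(4\pi f^k/c)^2$ is the free-space pathloss factor of subchannel $k$, and $|g|^2>0$ is the (fixed) small-scale fading power. The BS is at $(0,0,H_B)$, UE $n$ at $(x_n,y_n,0)$, and the UAV altitude is above the terminal. The reference point $(x^0,y^0)$ is the horizontal UAV position from the previous iteration of a successive convex programming procedure. *)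

From Stdlib Require Import Reals.
Open Scope R_scope.

Definition dist3 (p q h0 z x y : R) : R :=
  sqrt ((x - p)^2 + (y - q)^2 + (z - h0)^2).

Definition theta (p q h0 z x y : R) : R :=
  180 / PI * asin ((z - h0) / dist3 p q h0 z x y).

Definition PR (a b p q h0 z x y : R) : R :=
  1 / (1 + a * exp (- b * (theta p q h0 z x y - a))).

Definition gain (a b etaL etaN L G p q h0 z x y : R) : R :=
  G / ((dist3 p q h0 z x y)^2 * L *
       (PR a b p q h0 z x y * etaL + (1 - PR a b p q h0 z x y) * etaN)).

Definition Cst (p q h0 z x0 y0 : R) : R := dist3 p q h0 z x0 y0 / (z - h0).

Definition theta_bar (p q h0 z x0 y0 x y : R) : R :=
  let C := Cst p q h0 z x0 y0 in
  180 / PI * (asin (1 / C)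
              - 1 / (C * sqrt (C^2 - 1)) * (dist3 p q h0 z x y / (z - h0) - C)).

Definition Dst (a b p q h0 z x0 y0 : R) : R :=
  1 + a * exp (- b * (theta_bar p q h0 z x0 y0 x0 y0 - a)).

Definition PR_bar (a b p q h0 z x0 y0 x y : R) : R :=
  let D := Dst a b p q h0 z x0 y0 in
  2 / D - 1 / D^2 - a / D^2 * exp (- b * (theta_bar p q h0 z x0 y0 x y - a)).

Definition Lambda (a b etaL etaN L p q h0 z x0 y0 x y : R) : R :=
  (dist3 p q h0 z x y)^2 * L *
  (PR_bar a b p q h0 z x0 y0 x y * etaL
   + (1 - PR_bar a b p q h0 z x0 y0 x y) * etaN).

Definition Hsur (a b etaL etaN L G p q h0 z x0 y0 x y : R) : R :=
  let L0 := Lambda a b etaL etaN L p q h0 z x0 y0 x0 y0 in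
  G * (2 / L0 - Lambda a b etaL etaN L p q h0 z x0 y0 x y / L0^2).

Definition concave2 (f : R -> R -> R) : Prop :=
  forall x1 y1 x2 y2 t, 0 <= t <= 1 ->
    t * f x1 y1 + (1 - t) * f x2 y2
      <= f (t * x1 + (1 - t) * x2) (t * y1 + (1 - t) * y2).

From Stdlib Require Import Reals Lra Psatz.
Open Scope R_scope.

(* Proof idea.  Both claims reduce to the geometry of the distance
   d(x,y) = |(x,y,z) - (p,q,h0)| >= z - h0 and to first-order (tangent) bounds.

   Writing u = d/(z-h0) >= 1, the true elevation angle is
   (180/PI) asin (1/u) and theta_bar is its tangent line in u at u = C.  Since
   u |-> asin (1/u) is convex (equivalently: csc is convex on (0, PI/2]), we get
   theta_bar <= theta, hence exp(-b(theta_bar-a)) >= exp(-b(theta-a)).  The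
   surrogate PR_bar is then below the tangent at D of the convex map X |-> 1/X,
   evaluated at X = 1 + a exp(-b(theta-a)), so PR_bar <= PR; as eta_LoS < eta_NLoS
   this gives Lambda >= d^2 L (PR eta_LoS + (1-PR) eta_NLoS) > 0.  Finally H is
   the tangent at Lambda0 of G/Lambda, so H <= G/Lambda <= h.

   Lambda(x,y) = L * s^2 (K + M exp(al + be s)) with s = d(x,y)
   and K, M, be >= 0; this profile is nondecreasing and convex on [0,oo) and d is
   convex (the Euclidean norm), so Lambda is convex; H is a nonincreasing affine
   function of Lambda, hence concave. *)

Lemma exp_le_compat (x y : R) : x <= y -> exp x <= exp y.
Proof. intros [Hlt | ->]; [left; apply exp_increasing |]; lra. Qed.

(* Tangent bound for the convex map x |-> 1/x at y (for y = 0 the left side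
   is 0 by the convention / 0 = 0).  Used for both PR_bar and H. *)
Lemma recip_tangent (x y : R) : 0 < x -> 2 / y - x / y ^ 2 <= 1 / x.
Proof.
  intros Hx.
  destruct (Req_dec y 0) as [-> | Hy].
  - replace (0 ^ 2) with 0 by ring; unfold Rdiv; rewrite Rinv_0.
    assert (0 < / x) by (apply Rinv_0_lt_compat; lra). lra.
  - assert (Hy2 : 0 < y ^ 2) by (rewrite <- Rsqr_pow2; apply Rsqr_pos_lt; exact Hy).
    assert (Gap : 1 / x - (2 / y - x / y ^ 2) = (x - y) ^ 2 / (x * y ^ 2))
      by (field; lra).
    assert (0 <= (x - y) ^ 2 / (x * y ^ 2)).
    { apply Rle_mult_inv_pos; [apply pow2_ge_0 | nra]. }
    lra.
Qed.

(* x cos x <= sin x on [0, PI], by the mean value theorem applied to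
   sin x - x cos x, whose derivative x sin x is nonnegative there. *)
Lemma xcos_le_sin (d : R) : 0 <= d <= PI -> d * cos d <= sin d.
Proof.
  intros [H0 H1].
  destruct (Req_dec d 0) as [-> | Hn]; [rewrite sin_0; lra |].
  destruct (MVT_cor2 (fun x => sin x - x * cos x) (fun x => x * sin x) 0 d)
    as [c [Hmvt Hc]]; [lra | |].
  { intros c _.
    replace (c * sin c) with (cos c - (1 * cos c + c * - sin c)) by ring.
    apply (derivable_pt_lim_minus sin (fun x => x * cos x)).
    - apply derivable_pt_lim_sin.
    - apply (derivable_pt_lim_mult id cos);
        [apply derivable_pt_lim_id | apply derivable_pt_lim_cos]. }
  rewrite sin_0, cos_0 in Hmvt.
  assert (0 <= sin c) by (apply sin_ge_0; lra).
  assert (0 <= c * sin c * (d - 0)) by (apply Rmult_le_pos; nra).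
  lra.
Qed.

(* Tangent-line inequality for the convex function csc = 1/sin at f0,
   multiplied out by sin f0 ^ 2 * sin f > 0. *)
Lemma csc_tangent (f f0 : R) : 0 < f <= PI / 2 -> 0 < f0 < PI / 2 ->
  sin f0 * (sin f - sin f0) <= cos f0 * sin f * (f - f0).
Proof.
  intros Hf Hf0.
  pose proof PI_RGT_0.
  assert (Hs0 : 0 < sin f0) by (apply sin_gt_0; lra).
  assert (Hc0 : 0 < cos f0) by (apply cos_gt_0; lra).
  assert (Hs : 0 < sin f) by (apply sin_gt_0; lra).
  destruct (Rle_or_lt f0 f) as [Hle | Hlt].
  - (* f = f0 + d, d >= 0: the left side is at most cos f0 sin f sin d <= ... d *)
    set (d := f - f0).
    assert (Hsf : sin f = sin f0 * cos d + cos f0 * sin d)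
      by (replace f with (f0 + d) by (unfold d; ring); rewrite sin_plus; ring).
    assert (Hsd : sin d <= d).
    { destruct (Req_dec d 0) as [E | Hd];
        [rewrite E, sin_0 | left; apply sin_lt_x; unfold d in *]; lra. }
    assert (0 <= sin d) by (apply sin_ge_0; unfold d; lra).
    assert (cos d <= 1) by apply COS_bound.
    assert (sin f0 <= sin f) by (apply sin_incr_1; lra).
    assert (Gap : cos f0 * sin f * sin d - sin f0 * (sin f - sin f0)
                  = cos f0 * sin d * (sin f - sin f0) + sin f0 ^ 2 * (1 - cos d))
      by (rewrite Hsf; ring).
    assert (0 <= cos f0 * sin d * (sin f - sin f0)) by (apply Rmult_le_pos; nra).
    assert (0 <= sin f0 ^ 2 * (1 - cos d)) by (apply Rmult_le_pos; nra).
    assert (cos f0 * sin f * sin d <= cos f0 * sin f * d)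
      by (apply Rmult_le_compat_l; nra).
    fold d; lra.
  - (* f = f0 - e, e > 0: the gap is a sum of three nonnegative terms *)
    set (e := f0 - f).
    assert (Hsf : sin f = sin f0 * cos e - cos f0 * sin e)
      by (replace f with (f0 - e) by (unfold e; ring); rewrite sin_minus; ring).
    assert (Hxe : e * cos e <= sin e) by (apply xcos_le_sin; unfold e; lra).
    assert (0 <= sin e) by (apply sin_ge_0; unfold e; lra).
    assert (cos e <= 1) by apply COS_bound.
    assert (Gap : cos f0 * sin f * (f - f0) - sin f0 * (sin f - sin f0)
                  = sin f0 * cos f0 * (sin e - e * cos e)
                    + cos f0 ^ 2 * (e * sin e) + sin f0 ^ 2 * (1 - cos e))
      by (replace (f - f0) with (- e) by (unfold e; ring); rewrite Hsf; ring).
    assert (0 <= sin f0 * cos f0 * (sin e - e * cos e)) by (apply Rmult_le_pos; nra).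
    assert (0 <= cos f0 ^ 2 * (e * sin e)) by (apply Rmult_le_pos; [nra | unfold e in *; nra]).
    assert (0 <= sin f0 ^ 2 * (1 - cos e)) by (apply Rmult_le_pos; nra).
    lra.
Qed.

Lemma asin_pos (x : R) : 0 < x <= 1 -> 0 < asin x.
Proof.
  intros Hx.
  pose proof (asin_bound x) as Hb.
  destruct (Rle_or_lt (asin x) 0) as [Hle | Hlt]; [exfalso | exact Hlt].
  assert (sin (asin x) <= sin 0) by (apply sin_incr_1; lra).
  rewrite sin_asin, sin_0 in * by lra; lra.
Qed.

(* u |-> asin (1/u) lies above its tangent line at u = C on [1, oo); its
   slope at C is -1/(C sqrt(C^2-1)).  This is csc_tangent in the variable
   f = asin (1/u). *)
Lemma asin_inv_tangent (C u : R) : 1 < C -> 1 <= u ->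
  asin (1 / C) - 1 / (C * sqrt (C ^ 2 - 1)) * (u - C) <= asin (1 / u).
Proof.
  intros HC Hu.
  assert (Hs0 : 0 < 1 / C < 1)
    by (split; [apply Rdiv_lt_0_compat | apply (Rmult_lt_reg_l C); field_simplify]; lra).
  assert (Hs : 0 < 1 / u <= 1)
    by (split; [apply Rdiv_lt_0_compat | apply (Rmult_le_reg_l u); field_simplify]; lra).
  set (f := asin (1 / u)); set (f0 := asin (1 / C)).
  assert (Hsf : sin f = 1 / u) by (apply sin_asin; lra).
  assert (Hsf0 : sin f0 = 1 / C) by (apply sin_asin; lra).
  assert (Hf : 0 < f <= PI / 2) by (split; [apply asin_pos | apply asin_bound]; lra).
  assert (Hf0 : 0 < f0 < PI / 2) by (split; [apply asin_pos | apply asin_bound_lt]; lra).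
  assert (Hc0 : 0 < cos f0) by (apply cos_gt_0; lra).
  (* in terms of f0, the slope 1/(C sqrt(C^2-1)) is sin f0 ^ 2 / cos f0 *)
  assert (Hslope : C * sqrt (C ^ 2 - 1) = cos f0 / sin f0 ^ 2).
  { assert (Hcf0 : cos f0 = sqrt (1 - (1 / C)²)) by (apply cos_asin; lra).
    rewrite Hsf0, Hcf0.
    replace (C ^ 2 - 1) with (C ^ 2 * (1 - (1 / C)²)) by (unfold Rsqr; field; lra).
    rewrite sqrt_mult_alt, sqrt_pow2 by (try apply pow2_ge_0; lra).
    field; lra. }
  pose proof (csc_tangent f f0 Hf Hf0) as Ht.
  rewrite Hslope.
  replace (u - C) with (1 / sin f - 1 / sin f0) by (rewrite Hsf, Hsf0; field; lra).
  assert (Hprod : 0 < cos f0 * sin f) by (apply Rmult_lt_0_compat; lra).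
  apply (Rmult_le_reg_r (cos f0 * sin f)); [exact Hprod |].
  replace ((f0 - 1 / (cos f0 / sin f0 ^ 2) * (1 / sin f - 1 / sin f0)) * (cos f0 * sin f))
    with (f0 * (cos f0 * sin f) + sin f0 * (sin f - sin f0)) by (field; lra).
  lra.
Qed.

(* Cauchy-Schwarz inequality in R^3, via Lagrange's identity. *)
Lemma cauchy_schwarz3 (a1 a2 a3 b1 b2 b3 : R) :
  a1 * b1 + a2 * b2 + a3 * b3
    <= sqrt (a1 ^ 2 + a2 ^ 2 + a3 ^ 2) * sqrt (b1 ^ 2 + b2 ^ 2 + b3 ^ 2).
Proof.
  set (na := sqrt (a1 ^ 2 + a2 ^ 2 + a3 ^ 2)); set (nb := sqrt (b1 ^ 2 + b2 ^ 2 + b3 ^ 2)).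
  assert (Ha : na ^ 2 = a1 ^ 2 + a2 ^ 2 + a3 ^ 2) by (apply pow2_sqrt; nra).
  assert (Hb : nb ^ 2 = b1 ^ 2 + b2 ^ 2 + b3 ^ 2) by (apply pow2_sqrt; nra).
  assert (0 <= na) by apply sqrt_pos; assert (0 <= nb) by apply sqrt_pos.
  assert (Lagrange : na ^ 2 * nb ^ 2 - (a1 * b1 + a2 * b2 + a3 * b3) ^ 2
            = (a1 * b2 - a2 * b1) ^ 2 + (a1 * b3 - a3 * b1) ^ 2 + (a2 * b3 - a3 * b2) ^ 2)
    by (rewrite Ha, Hb; ring).
  assert (0 <= (a1 * b2 - a2 * b1) ^ 2 + (a1 * b3 - a3 * b1) ^ 2 + (a2 * b3 - a3 * b2) ^ 2)
    by (pose proof (pow2_ge_0 (a1 * b2 - a2 * b1)); pose proof (pow2_ge_0 (a1 * b3 - a3 * b1));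
        pose proof (pow2_ge_0 (a2 * b3 - a3 * b2)); lra).
  assert (0 <= na * nb) by (apply Rmult_le_pos; lra).
  nra.
Qed.

Lemma norm3_convex (a1 a2 a3 b1 b2 b3 t : R) : 0 <= t <= 1 ->
  sqrt ((t * a1 + (1 - t) * b1) ^ 2 + (t * a2 + (1 - t) * b2) ^ 2
        + (t * a3 + (1 - t) * b3) ^ 2)
    <= t * sqrt (a1 ^ 2 + a2 ^ 2 + a3 ^ 2) + (1 - t) * sqrt (b1 ^ 2 + b2 ^ 2 + b3 ^ 2).
Proof.
  intros Ht.
  pose proof (cauchy_schwarz3 a1 a2 a3 b1 b2 b3) as Hcs.
  set (na := sqrt (a1 ^ 2 + a2 ^ 2 + a3 ^ 2)) in *.
  set (nb := sqrt (b1 ^ 2 + b2 ^ 2 + b3 ^ 2)) in *.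
  assert (Ha : na ^ 2 = a1 ^ 2 + a2 ^ 2 + a3 ^ 2) by (apply pow2_sqrt; nra).
  assert (Hb : nb ^ 2 = b1 ^ 2 + b2 ^ 2 + b3 ^ 2) by (apply pow2_sqrt; nra).
  assert (0 <= na) by apply sqrt_pos; assert (0 <= nb) by apply sqrt_pos.
  assert (0 <= t * na + (1 - t) * nb) by nra.
  rewrite <- (sqrt_pow2 (t * na + (1 - t) * nb)) by assumption.
  apply sqrt_le_1_alt.
  assert (t * (1 - t) * (a1 * b1 + a2 * b2 + a3 * b3) <= t * (1 - t) * (na * nb))
    by (apply Rmult_le_compat_l; nra).
  nra.
Qed.

Lemma dist3_convex (p q h0 z x1 y1 x2 y2 t : R) : 0 <= t <= 1 ->
  dist3 p q h0 z (t * x1 + (1 - t) * x2) (t * y1 + (1 - t) * y2)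
    <= t * dist3 p q h0 z x1 y1 + (1 - t) * dist3 p q h0 z x2 y2.
Proof.
  intros Ht. unfold dist3.
  replace (t * x1 + (1 - t) * x2 - p) with (t * (x1 - p) + (1 - t) * (x2 - p)) by ring.
  replace (t * y1 + (1 - t) * y2 - q) with (t * (y1 - q) + (1 - t) * (y2 - q)) by ring.
  replace ((z - h0) ^ 2) with ((t * (z - h0) + (1 - t) * (z - h0)) ^ 2) at 1 by ring.
  apply norm3_convex; exact Ht.
Qed.

(* The radial profile of the surrogate path loss: Lambda = L * profile (d). *)
Definition profile (K M al be s : R) : R := s ^ 2 * (K + M * exp (al + be * s)).

(* With nonnegative coefficients the profile is nondecreasing and convex on
   [0, oo), so its composition with a convex nonnegative function is convex. *)
Section Profile.
Variables K M al be : R.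
Hypotheses (HK : 0 <= K) (HM : 0 <= M) (Hbe : 0 <= be).

Lemma profile_mono (s s' : R) : 0 <= s <= s' -> profile K M al be s <= profile K M al be s'.
Proof.
  intros Hs. unfold profile.
  assert (exp (al + be * s) <= exp (al + be * s')) by (apply exp_le_compat; nra).
  pose proof (exp_pos (al + be * s)).
  apply Rmult_le_compat; nra.
Qed.

(* The profile lies above its tangent at any x >= 0 (using 1 + t <= exp t). *)
Lemma profile_tangent (x y : R) : 0 <= x -> 0 <= y ->
  profile K M al be x + (2 * K * x + M * exp (al + be * x) * (2 * x + be * x ^ 2)) * (y - x)
    <= profile K M al be y.
Proof.
  intros Hx Hy. unfold profile.
  set (e := exp (al + be * x)).
  assert (He : 0 < e) by apply exp_pos.
  replace (exp (al + be * y)) with (e * exp (be * (y - x)))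
    by (unfold e; rewrite <- exp_plus; f_equal; ring).
  pose proof (exp_ineq1_le (be * (y - x))) as Hexp.
  set (E := exp (be * (y - x))) in *.
  (* the quadratic part and the exponential part each lie above their tangent *)
  assert (Hquad : K * (x ^ 2 + 2 * x * (y - x)) <= K * y ^ 2)
    by (apply Rmult_le_compat_l; [lra | pose proof (pow2_ge_0 (y - x)); nra]).
  assert (Hgap : y ^ 2 * (1 + be * (y - x)) - (x ^ 2 + (2 * x + be * x ^ 2) * (y - x))
                 = (y - x) ^ 2 * (1 + be * (x + y))) by ring.
  assert (0 <= (y - x) ^ 2 * (1 + be * (x + y)))
    by (apply Rmult_le_pos; [apply pow2_ge_0 | nra]).
  assert (y ^ 2 * (1 + be * (y - x)) <= y ^ 2 * E) by (apply Rmult_le_compat_l; nra).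
  assert (Hexpo : M * e * (x ^ 2 + (2 * x + be * x ^ 2) * (y - x)) <= M * e * (y ^ 2 * E))
    by (apply Rmult_le_compat_l; nra).
  lra.
Qed.

(* Convexity combined with monotonicity: the form needed to compose with d. *)
Lemma profile_convex (s s1 s2 t : R) : 0 <= s1 -> 0 <= s2 -> 0 <= t <= 1 ->
  0 <= s <= t * s1 + (1 - t) * s2 ->
  profile K M al be s <= t * profile K M al be s1 + (1 - t) * profile K M al be s2.
Proof.
  intros H1 H2 Ht Hs.
  set (m := t * s1 + (1 - t) * s2) in *.
  assert (0 <= m) by lra.
  pose proof (profile_mono s m Hs).
  pose proof (profile_tangent m s1 ltac:(lra) H1) as T1.
  pose proof (profile_tangent m s2 ltac:(lra) H2) as T2.
  set (g := 2 * K * m + M * exp (al + be * m) * (2 * m + be * m ^ 2)) in *.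
  apply (Rmult_le_compat_l t) in T1; [| lra].
  apply (Rmult_le_compat_l (1 - t)) in T2; [| lra].
  assert (t * (g * (s1 - m)) + (1 - t) * (g * (s2 - m)) = 0) by (unfold m; ring).
  lra.
Qed.

End Profile.

Definition convex2 (f : R -> R -> R) : Prop :=
  forall x1 y1 x2 y2 t, 0 <= t <= 1 ->
    f (t * x1 + (1 - t) * x2) (t * y1 + (1 - t) * y2) <= t * f x1 y1 + (1 - t) * f x2 y2.

Lemma concave2_of_convex2 (f g : R -> R -> R) (c k : R) :
  0 <= k -> convex2 g -> (forall x y, f x y = c - k * g x y) -> concave2 f.
Proof.
  intros Hk Hg Hf x1 y1 x2 y2 t Ht.
  rewrite !Hf.
  pose proof (Hg x1 y1 x2 y2 t Ht).
  assert (k * g (t * x1 + (1 - t) * x2) (t * y1 + (1 - t) * y2)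
          <= k * (t * g x1 y1 + (1 - t) * g x2 y2)) by (apply Rmult_le_compat_l; lra).
  lra.
Qed.

Lemma dist3_ge (p q h0 z x y : R) : h0 <= z -> z - h0 <= dist3 p q h0 z x y.
Proof.
  intros Hz. unfold dist3.
  rewrite <- (sqrt_pow2 (z - h0)) at 1 by lra.
  apply sqrt_le_1_alt.
  pose proof (pow2_ge_0 (x - p)); pose proof (pow2_ge_0 (y - q)); lra.
Qed.

Lemma Cst_gt1 (p q h0 z x0 y0 : R) : h0 < z -> (x0, y0) <> (p, q) ->
  1 < Cst p q h0 z x0 y0.
Proof.
  intros Hz Hn.
  assert (Hoff : 0 < (x0 - p) ^ 2 + (y0 - q) ^ 2).
  { destruct (Req_dec x0 p) as [-> | Hx].
    - assert (y0 <> q) by (intros ->; apply Hn; reflexivity).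
      assert (0 < (y0 - q) ^ 2) by (rewrite <- Rsqr_pow2; apply Rsqr_pos_lt; lra).
      nra.
    - assert (0 < (x0 - p) ^ 2) by (rewrite <- Rsqr_pow2; apply Rsqr_pos_lt; lra).
      pose proof (pow2_ge_0 (y0 - q)); lra. }
  assert (Hd : z - h0 < dist3 p q h0 z x0 y0).
  { unfold dist3. rewrite <- (sqrt_pow2 (z - h0)) at 1 by lra.
    apply sqrt_lt_1_alt. pose proof (pow2_ge_0 (z - h0)); lra. }
  unfold Cst. apply (Rmult_lt_reg_r (z - h0)); [lra |]. field_simplify; lra.
Qed.

Lemma theta_bar_le_theta (p q h0 z x0 y0 x y : R) : h0 < z -> (x0, y0) <> (p, q) ->
  theta_bar p q h0 z x0 y0 x y <= theta p q h0 z x y.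
Proof.
  intros Hz Hn. unfold theta_bar, theta. cbv zeta.
  pose proof (Cst_gt1 p q h0 z x0 y0 Hz Hn) as HC.
  pose proof (dist3_ge p q h0 z x y ltac:(lra)) as Hd.
  set (d := dist3 p q h0 z x y) in *.
  assert (Hu : 1 <= d / (z - h0))
    by (apply (Rmult_le_reg_r (z - h0)); [| field_simplify]; lra).
  pose proof (asin_inv_tangent _ _ HC Hu) as Ht.
  replace (1 / (d / (z - h0))) with ((z - h0) / d) in Ht by (field; lra).
  apply Rmult_le_compat_l; [| exact Ht].
  pose proof PI_RGT_0; left; apply Rdiv_lt_0_compat; lra.
Qed.

(* D >= 1, so the coefficients of PR_bar are well defined and nonnegative. *)
Lemma Dst_ge1 (a b p q h0 z x0 y0 : R) : 0 <= a -> 1 <= Dst a b p q h0 z x0 y0.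
Proof.
  intros Ha. unfold Dst.
  pose proof (exp_pos (- b * (theta_bar p q h0 z x0 y0 x0 y0 - a))); nra.
Qed.

(* PR_bar underestimates PR: smaller angle gives larger exponential, and
   PR_bar is the tangent of 1/X at X = D evaluated at the surrogate exponent. *)
Lemma PR_bar_le_PR (a b p q h0 z x0 y0 x y : R) : 0 <= a -> 0 <= b ->
  theta_bar p q h0 z x0 y0 x y <= theta p q h0 z x y ->
  PR_bar a b p q h0 z x0 y0 x y <= PR a b p q h0 z x y.
Proof.
  intros Ha Hb Hth. unfold PR_bar, PR. cbv zeta.
  pose proof (Dst_ge1 a b p q h0 z x0 y0 Ha) as HD.
  set (D := Dst a b p q h0 z x0 y0) in *.
  set (e := exp (- b * (theta p q h0 z x y - a))).
  set (e_bar := exp (- b * (theta_bar p q h0 z x0 y0 x y - a))).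
  assert (He : e <= e_bar) by (apply exp_le_compat; nra).
  assert (0 < e) by apply exp_pos.
  assert (0 <= a / D ^ 2) by (apply Rle_mult_inv_pos; nra).
  assert (a / D ^ 2 * e <= a / D ^ 2 * e_bar) by (apply Rmult_le_compat_l; lra).
  pose proof (recip_tangent (1 + a * e) D ltac:(nra)) as Hrec.
  replace ((1 + a * e) / D ^ 2) with (1 / D ^ 2 + a / D ^ 2 * e) in Hrec
    by (unfold Rdiv; ring).
  lra.
Qed.

(* The true path loss is positive and dominated by the surrogate Lambda,
   because PR_bar <= PR and the LoS attenuation is the smaller one. *)
Lemma path_loss_le_Lambda (a b etaL etaN L p q h0 z x0 y0 x y : R) :
  h0 < z -> 0 <= a -> 0 <= b -> 0 < etaL -> etaL <= etaN -> 0 < L -> (x0, y0) <> (p, q) ->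
  let P := PR a b p q h0 z x y in
  0 < dist3 p q h0 z x y ^ 2 * L * (P * etaL + (1 - P) * etaN)
    <= Lambda a b etaL etaN L p q h0 z x0 y0 x y.
Proof.
  intros Hz Ha Hb HL HLN HLp Hn P.
  pose proof (PR_bar_le_PR a b p q h0 z x0 y0 x y Ha Hb
                (theta_bar_le_theta p q h0 z x0 y0 x y Hz Hn)) as Hpr.
  assert (HP : 0 < P <= 1).
  { unfold P, PR. set (e := exp (- b * (theta p q h0 z x y - a))).
    assert (0 < e) by apply exp_pos.
    split; [apply Rdiv_lt_0_compat | apply (Rmult_le_reg_r (1 + a * e)); [| field_simplify]];
      nra. }
  pose proof (dist3_ge p q h0 z x y ltac:(lra)) as Hd.
  unfold Lambda. fold P in Hpr.
  set (d := dist3 p q h0 z x y) in *.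
  set (P_bar := PR_bar a b p q h0 z x0 y0 x y) in *.
  split.
  - apply Rmult_lt_0_compat; [apply Rmult_lt_0_compat; [apply pow_lt |] |]; nra.
  - apply Rmult_le_compat_l; [pose proof (pow2_ge_0 d) |]; nra.
Qed.

Lemma Hsur_le_gain (a b etaL etaN L G p q h0 z x0 y0 x y : R) :
  h0 < z -> 0 <= a -> 0 <= b -> 0 < etaL -> etaL <= etaN -> 0 < L -> 0 <= G ->
  (x0, y0) <> (p, q) ->
  Hsur a b etaL etaN L G p q h0 z x0 y0 x y <= gain a b etaL etaN L G p q h0 z x y.
Proof.
  intros Hz Ha Hb HL HLN HLp HG Hn.
  destruct (path_loss_le_Lambda a b etaL etaN L p q h0 z x0 y0 x y Hz Ha Hb HL HLN HLp Hn)
    as [Hpos Hle].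
  unfold Hsur, gain. cbv zeta.
  set (L0 := Lambda a b etaL etaN L p q h0 z x0 y0 x0 y0).
  set (Lxy := Lambda a b etaL etaN L p q h0 z x0 y0 x y) in *.
  set (den := dist3 p q h0 z x y ^ 2 * L * _) in *.
  (* H uses the tangent of 1/Lambda at Lambda0, and Lambda dominates the path loss *)
  pose proof (recip_tangent Lxy L0 ltac:(lra)) as Hrec.
  assert (/ Lxy <= / den) by (apply Rinv_le_contravar; assumption).
  replace (G / den) with (G * (1 / den)) by (unfold Rdiv; ring).
  apply Rmult_le_compat_l; [exact HG |].
  apply (Rle_trans _ (1 / Lxy)); [exact Hrec | unfold Rdiv; lra].
Qed.

(* Lambda depends on (x, y) only through d, as L times a profile with
   nonnegative coefficients (theta_bar is affine in d). *)
Lemma Lambda_profile_form (a b etaL etaN L p q h0 z x0 y0 : R) :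
  h0 < z -> 0 <= a -> 0 <= b -> 0 <= etaL -> etaL <= etaN -> (x0, y0) <> (p, q) ->
  exists K M al be, 0 <= K /\ 0 <= M /\ 0 <= be /\
    forall x y, Lambda a b etaL etaN L p q h0 z x0 y0 x y
                = L * profile K M al be (dist3 p q h0 z x y).
Proof.
  intros Hz Ha Hb HL HLN Hn.
  pose proof (Dst_ge1 a b p q h0 z x0 y0 Ha) as HD.
  pose proof (Cst_gt1 p q h0 z x0 y0 Hz Hn) as HC.
  set (D := Dst a b p q h0 z x0 y0) in *.
  set (C := Cst p q h0 z x0 y0) in *.
  set (k := 1 / (C * sqrt (C ^ 2 - 1))).
  assert (Hk : 0 <= k).
  { assert (0 < sqrt (C ^ 2 - 1)) by (apply sqrt_lt_R0; nra).
    left; apply Rdiv_lt_0_compat; nra. }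
  exists (etaN - (2 / D - 1 / D ^ 2) * (etaN - etaL)), (a / D ^ 2 * (etaN - etaL)),
         (- b * (180 / PI * (asin (1 / C) + k * C) - a)), (b * (180 / PI) * k / (z - h0)).
  pose proof PI_RGT_0.
  split; [| split; [| split]].
  - replace (2 / D - 1 / D ^ 2) with (1 - (1 - 1 / D) ^ 2) by (field; lra).
    pose proof (pow2_ge_0 (1 - 1 / D)); nra.
  - apply Rmult_le_pos; [apply Rle_mult_inv_pos |]; nra.
  - apply Rle_mult_inv_pos; [| lra].
    apply Rmult_le_pos; [apply Rmult_le_pos; [| left; apply Rdiv_lt_0_compat] |]; lra.
  - intros x y. unfold Lambda, PR_bar, profile. cbv zeta. fold D.
    replace (theta_bar p q h0 z x0 y0 x y) with
      (180 / PI * (asin (1 / C) + k * C) - 180 / PI * k / (z - h0) * dist3 p q h0 z x y)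
      by (unfold theta_bar; cbv zeta; fold C k; field; lra).
    replace (- b * (180 / PI * (asin (1 / C) + k * C)
                    - 180 / PI * k / (z - h0) * dist3 p q h0 z x y - a))
      with (- b * (180 / PI * (asin (1 / C) + k * C) - a)
            + b * (180 / PI) * k / (z - h0) * dist3 p q h0 z x y)
      by (field; lra).
    ring.
Qed.

Lemma Lambda_convex (a b etaL etaN L p q h0 z x0 y0 : R) :
  h0 < z -> 0 <= a -> 0 <= b -> 0 <= etaL -> etaL <= etaN -> 0 <= L -> (x0, y0) <> (p, q) ->
  convex2 (Lambda a b etaL etaN L p q h0 z x0 y0).
Proof.
  intros Hz Ha Hb HL HLN HLp Hn x1 y1 x2 y2 t Ht.
  destruct (Lambda_profile_form a b etaL etaN L p q h0 z x0 y0 Hz Ha Hb HL HLN Hn)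
    as (K & M & al & be & HK & HM & Hbe & Hform).
  rewrite !Hform.
  pose proof (dist3_convex p q h0 z x1 y1 x2 y2 t Ht) as Hdist.
  set (d := dist3 p q h0 z) in *.
  assert (Hd : forall x y, 0 <= d x y) by (intros; apply sqrt_pos).
  pose proof (profile_convex K M al be HK HM Hbe _ _ _ t (Hd x1 y1) (Hd x2 y2) Ht
                (conj (Hd _ _) Hdist)) as Hprof.
  apply (Rmult_le_compat_l L) in Hprof; [| exact HLp].
  lra.
Qed.

Theorem theorem1 (p q h0 z a b etaL etaN L G x0 y0 : R) :
  h0 < z -> 0 < a -> 0 < b -> 0 < etaL -> etaL < etaN -> 0 < L -> 0 < G ->
  (x0, y0) <> (p, q) ->
  (forall x y,
     Hsur a b etaL etaN L G p q h0 z x0 y0 x y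
       <= gain a b etaL etaN L G p q h0 z x y) /\
  concave2 (Hsur a b etaL etaN L G p q h0 z x0 y0).
Proof.
  intros Hz Ha Hb HL HLN HLp HG Hn.
  assert (Ha' : 0 <= a) by lra; assert (Hb' : 0 <= b) by lra.
  assert (HLN' : etaL <= etaN) by lra.
  split.
  - intros x y. exact (Hsur_le_gain a b etaL etaN L G p q h0 z x0 y0 x y
                         Hz Ha' Hb' HL HLN' HLp (Rlt_le _ _ HG) Hn).
  - set (L0 := Lambda a b etaL etaN L p q h0 z x0 y0 x0 y0).
    assert (HL0 : 0 < L0).
    { destruct (path_loss_le_Lambda a b etaL etaN L p q h0 z x0 y0 x0 y0
                  Hz Ha' Hb' HL HLN' HLp Hn) as [Hpos Hle].
      fold L0 in Hle; lra. }
    (* H = G (2/L0) - (G/L0^2) Lambda with G/L0^2 >= 0 *)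
    apply (concave2_of_convex2 _ (Lambda a b etaL etaN L p q h0 z x0 y0)
             (G * (2 / L0)) (G / L0 ^ 2)).
    + apply Rle_mult_inv_pos; [lra | apply pow_lt; exact HL0].
    + exact (Lambda_convex a b etaL etaN L p q h0 z x0 y0 Hz Ha' Hb' (Rlt_le _ _ HL) HLN'
               (Rlt_le _ _ HLp) Hn).
    + intros x y. unfold Hsur. fold L0. unfold Rdiv; ring.
Qed.
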